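(* Let $R$ be a ring and $\mathcal{X}$ a class of left $R$-modules. Suppose every left $R$-module $M$ has a surjective $\mathcal{X}$-projective precover $\phi: P \to M$ (i.e. $P$ is an $\mathcal{X}$-projective module and $\phi$ is a precover with respect to the class of $\mathcal{X}$-projective modules) with $\ker\phi \in \mathcal{X}$. Then every bounded complex of left $R$-modules has a $C(\mathcal{X}\text{-projective})$-precover.
   Context: A left $R$-module $P$ is $\mathcal{X}$-projective if $\mathrm{Ext}^1_R(P, N) = 0$ for all $N \in \mathcal{X}$. $C(\mathcal{X}\text{-projective})$ denotes the class of complexes all of whose terms are $\mathcal{X}$-projective modules. For a class $\mathcal{F}$ of objects in an abelian category, a morphism $\phi: F \to M$ with $F \in \mathcal{F}$ is an $\mathcal{F}$-precover of $M$ if every morphism $f: F' \to M$ with $F' \in \mathcal{F}$ factors as $f = \phi g$ for some $g: F' \to F$. A complex is bounded if only finitely many of its terms are nonzero. *)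

From HB Require Import structures.
From mathcomp Require Import all_boot all_order all_algebra.
Set Implicit Arguments. Unset Strict Implicit. Unset Printing Implicit Defensive.
Import GRing.Theory.
Local Open Scope ring_scope.

Section Defs.
Variable R : nzRingType.

(* Ext^1_R(P, N) = 0, in Yoneda form: every extension 0 -> N -> E -> P -> 0
   of left R-modules splits (is equivalent to the zero/split extension). *)
Definition Ext1_vanishes (P N : lmodType R) : Prop :=
  forall (E : lmodType R) (i : {linear N -> E}) (p : {linear E -> P}),
    injective i ->
    (forall y : P, exists e : E, p e = y) ->
    (forall e : E, p e = 0 <-> exists n : N, i n = e) ->
    exists s : {linear P -> E}, forall x : P, p (s x) = x.

Definition Xprojective (X : lmodType R -> Prop) (P : lmodType R) : Prop :=
  forall N : lmodType R, X N -> Ext1_vanishes P N.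

Definition mod_precover (F : lmodType R -> Prop) (P M : lmodType R)
    (phi : {linear P -> M}) : Prop :=
  F P /\ forall (P' : lmodType R) (f : {linear P' -> M}), F P' ->
    exists g : {linear P' -> P}, forall x, f x = phi (g x).

Definition ker_in (X : lmodType R -> Prop) (P M : lmodType R)
    (phi : {linear P -> M}) : Prop :=
  exists (K : lmodType R) (iota : {linear K -> P}),
    X K /\ injective iota /\
    forall x : P, phi x = 0 <-> exists k : K, iota k = x.

Record complex := Complex {
  cobj : int -> lmodType R;
  cdiff : forall n : int, {linear cobj n -> cobj (n + 1)};
  cdiff_sq : forall (n : int) (x : cobj n), cdiff (n + 1) (cdiff n x) = 0
}.

Record cmorph (C D : complex) := CMorph {
  cmap : forall n : int, {linear cobj C n -> cobj D n};
  cmap_comm : forall (n : int) (x : cobj C n),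
      cmap (n + 1) (cdiff C n x) = cdiff D n (cmap n x)
}.

Definition bounded (C : complex) : Prop :=
  exists N : nat, forall n : int, (N%:Z < `|n|)%R -> forall x : cobj C n, x = 0.

Definition cx_precover (F : complex -> Prop) (D C : complex)
    (phi : cmorph D C) : Prop :=
  F D /\ forall (D' : complex) (f : cmorph D' C), F D' ->
    exists g : cmorph D' D, forall n (x : cobj D' n),
      cmap f n x = cmap phi n (cmap g n x).

Definition C_Xproj (X : lmodType R -> Prop) (C : complex) : Prop :=
  forall n : int, Xprojective X (cobj C n).

End Defs.

From HB Require Import structures.
From mathcomp Require Import all_boot all_order all_algebra.
From mathcomp Require Import zify.
From Stdlib Require Import ClassicalEpsilon.
Set Implicit Arguments. Unset Strict Implicit. Unset Printing Implicit Defensive.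
Import Order.TTheory GRing.Theory Num.Theory.
Local Open Scope ring_scope.

(* Let C vanish above degree N and reindex it as a chain C_k := C_(N-k), k : nat.
   Build a chain A_k -> C_k inductively: A_0 precovers C_0, and A_(k+1)
   precovers the module of pairs (c, a) in C_(k+1) x A_k with d a = 0 and
   d c = aug a; the two projections give the differential and the augmentation,
   and d d = 0 because the image lies in the cycles.  A chain map from a chain
   with terms in the class lifts degree by degree through these precovers, the
   pair (f x, g (d x)) always landing in the module being precovered. *)

Section Kernel.
Variables (R : nzRingType) (V W : lmodType R) (h : {linear V -> W}).

Definition ker_pred : {pred V} := fun x => h x == 0.

Lemma ker_pred_submod_closed : submod_closed ker_pred.
Proof.
split; first by rewrite unfold_in /ker_pred /= raddf0.
move=> a u v; rewrite !unfold_in /ker_pred /= linearP => /eqP -> /eqP ->.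
by rewrite scaler0 addr0.
Qed.

HB.instance Definition _ :=
  GRing.isSubmodClosed.Build R V ker_pred ker_pred_submod_closed.

Record ker_mod := KerMod { ker_val : V; _ : ker_val \in ker_pred }.
HB.instance Definition _ := [isSub for ker_val].
HB.instance Definition _ := [Choice of ker_mod by <:].
HB.instance Definition _ := [SubChoice_isSubLmodule of ker_mod by <:].

Lemma ker_val_is_linear : linear ker_val. Proof. by []. Qed.
HB.instance Definition _ :=
  GRing.isLinear.Build R ker_mod V _ ker_val ker_val_is_linear.

Lemma ker_valP (x : ker_mod) : h (ker_val x) = 0.
Proof. by case: x => v /= /eqP. Qed.

Variables (U : lmodType R) (f : {linear U -> V}) (hf : forall x, h (f x) = 0).

Definition ker_corestr (x : U) : ker_mod := KerMod (introT eqP (hf x)).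

Lemma ker_corestr_is_linear : linear ker_corestr.
Proof. by move=> a x y; apply: val_inj; rewrite /= linearP. Qed.
HB.instance Definition _ :=
  GRing.isLinear.Build R U ker_mod _ ker_corestr ker_corestr_is_linear.

Lemma ker_corestrE x : ker_val (ker_corestr x) = f x. Proof. by []. Qed.

End Kernel.

Section Pairing.
Variables (R : nzRingType) (U V W : lmodType R).
Variables (f : {linear U -> V}) (g : {linear U -> W}).

Definition pair_lin (x : U) : (V * W)%type := (f x, g x).

Lemma pair_lin_is_linear : linear pair_lin.
Proof. by move=> a x y; rewrite /pair_lin !linearP. Qed.
HB.instance Definition _ :=
  GRing.isLinear.Build R U (V * W)%type _ pair_lin pair_lin_is_linear.

End Pairing.

Section Cast.
Variables (R : nzRingType) (I : eqType) (F : I -> lmodType R).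

Definition cast_lin (i j : I) (e : i = j) : {linear F i -> F j} :=
  match e in _ = j return {linear F i -> F j} with erefl => idfun end.

Lemma cast_lin_id i (e : i = i) x : cast_lin e x = x.
Proof. by rewrite (eq_irrelevance e erefl). Qed.

Lemma cast_linK i j (e1 : i = j) (e2 : j = i) x : cast_lin e2 (cast_lin e1 x) = x.
Proof. by case: j / e1 e2 => e2; rewrite cast_lin_id. Qed.

Lemma cast_lin_irr i j (e1 e2 : i = j) x : cast_lin e1 x = cast_lin e2 x.
Proof. by rewrite (eq_irrelevance e1 e2). Qed.

End Cast.

Section Chains.
Variable R : nzRingType.

Record chain := Chain {
  chobj : nat -> lmodType R;
  chdiff : forall k : nat, {linear chobj k.+1 -> chobj k};
  chdiff_sq : forall k (x : chobj k.+2), chdiff k (chdiff k.+1 x) = 0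
}.

Record chmorph (A B : chain) := ChMorph {
  chmap : forall k : nat, {linear chobj A k -> chobj B k};
  chmap_comm : forall k (x : chobj A k.+1),
      chmap k (chdiff A k x) = chdiff B k (chmap k.+1 x)
}.

End Chains.

Section ChainPrecover.
Variables (R : nzRingType) (F : lmodType R -> Prop).
Hypothesis has_precover : forall M : lmodType R,
  exists (P : lmodType R) (phi : {linear P -> M}), mod_precover F phi.

Definition pc_sig (M : lmodType R) :=
  constructive_indefinite_description _ (has_precover M).
Definition pc_obj (M : lmodType R) : lmodType R := proj1_sig (pc_sig M).
Definition pc_map (M : lmodType R) : {linear pc_obj M -> M} :=
  proj1_sig (constructive_indefinite_description _ (proj2_sig (pc_sig M))).

Lemma pc_mapP (M : lmodType R) : mod_precover F (pc_map M).
Proof. exact: proj2_sig (constructive_indefinite_description _ _). Qed.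

Definition pc_lift (M P' : lmodType R) (f : {linear P' -> M}) (hP' : F P') :
    {linear P' -> pc_obj M} :=
  proj1_sig (constructive_indefinite_description _ ((pc_mapP M).2 P' f hP')).

Lemma pc_liftE (M P' : lmodType R) (f : {linear P' -> M}) (hP' : F P') x :
  pc_map M (pc_lift f hP' x) = f x.
Proof. by rewrite /pc_lift; case: constructive_indefinite_description. Qed.

Variable C : chain R.

(* [stB] is the previous term [A_(k-1)] and [std] the differential into it; at
   [k = 0] there is no previous term and [stB] is [A_0] with the zero map. *)
Record stage (k : nat) := Stage {
  stA : lmodType R;
  stB : lmodType R;
  std : {linear stA -> stB};
  staug : {linear stA -> chobj C k}
}.

Section Step.
Variables (k : nat) (s : stage k).

Definition step_fun (z : (chobj C k.+1 * stA s)%type) : (chobj C k * stB s)%type :=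
  (chdiff C k z.1 - staug s z.2, std s z.2).

Lemma step_fun_is_linear : linear step_fun.
Proof.
move=> a [c1 y1] [c2 y2]; rewrite /step_fun /= !linearP /=.
by congr (_, _); rewrite /= scalerBr scalerN addrACA.
Qed.
HB.instance Definition _ := GRing.isLinear.Build R _ _ _ step_fun step_fun_is_linear.

Definition step_map : {linear (chobj C k.+1 * stA s)%type -> (chobj C k * stB s)%type} :=
  step_fun.

End Step.

Fixpoint stage_of (k : nat) : stage k :=
  match k return stage k with
  | 0 => Stage (\0 : {linear pc_obj (chobj C 0) -> pc_obj (chobj C 0)})
               (pc_map (chobj C 0))
  | k'.+1 =>
      let s := stage_of k' in
      let K := ker_mod (step_map s) in
      Stage (snd \o ker_val (h:=step_map s) \o pc_map K)
            (fst \o ker_val (h:=step_map s) \o pc_map K)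
  end.

Definition pc_term k := stA (stage_of k).
Definition pc_diff k : {linear pc_term k.+1 -> pc_term k} := std (stage_of k.+1).
Definition pc_aug k : {linear pc_term k -> chobj C k} := staug (stage_of k).

Lemma pc_term_in k : F (pc_term k).
Proof. by case: k => [|k]; apply: (pc_mapP _).1. Qed.

Lemma pc_diff_sq k (y : pc_term k.+2) : pc_diff k (pc_diff k.+1 y) = 0.
Proof.
rewrite /pc_diff /=.
have := ker_valP (pc_map (ker_mod (step_map (stage_of k.+1))) y).
by case: (ker_val _) => c z /= /(congr1 snd).
Qed.

Lemma pc_aug_comm k (y : pc_term k.+1) :
  pc_aug k (pc_diff k y) = chdiff C k (pc_aug k.+1 y).
Proof.
rewrite /pc_diff /pc_aug /=.
have := ker_valP (pc_map (ker_mod (step_map (stage_of k))) y).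
by case: (ker_val _) => c z /= /(congr1 fst) /= /eqP; rewrite subr_eq0 => /eqP.
Qed.

Definition pc_chain : chain R := Chain pc_diff_sq.
Definition pc_morph : chmorph pc_chain C := @ChMorph _ pc_chain C pc_aug pc_aug_comm.

Section Lift.
Variables (D : chain R) (f : chmorph D C) (HD : forall k, F (chobj D k)).

Record lift_stage k := LiftStage {
  lift_map : {linear chobj D k -> pc_term k};
  lift_mapP : forall x, pc_aug k (lift_map x) = chmap f k x;
  lift_map_cycle : forall x : chobj D k.+1, std (stage_of k) (lift_map (chdiff D k x)) = 0
}.

Definition lift_stage0 : lift_stage 0 :=
  @LiftStage 0 (pc_lift (chmap f 0) (HD 0)) (pc_liftE _ _) (fun=> erefl).

Section LiftStep.
Variables (k : nat) (g : lift_stage k).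

Definition lift_pair : {linear chobj D k.+1 -> (chobj C k.+1 * pc_term k)%type} :=
  pair_lin (chmap f k.+1) (lift_map g \o chdiff D k).

Lemma lift_pair_ker x : step_map (stage_of k) (lift_pair x) = 0.
Proof.
by rewrite /= /step_fun /pair_lin /= lift_mapP chmap_comm subrr lift_map_cycle.
Qed.

Definition lift_next : {linear chobj D k.+1 -> pc_term k.+1} :=
  pc_lift (ker_corestr lift_pair_ker) (HD k.+1).

Lemma lift_nextE x : pc_map _ (lift_next x) = ker_corestr lift_pair_ker x.
Proof. exact: pc_liftE. Qed.

Lemma lift_nextP x : pc_aug k.+1 (lift_next x) = chmap f k.+1 x.
Proof. by rewrite /pc_aug /= lift_nextE ker_corestrE. Qed.

Lemma lift_next_comm x : pc_diff k (lift_next x) = lift_map g (chdiff D k x).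
Proof. by rewrite /pc_diff /= lift_nextE ker_corestrE. Qed.

Lemma lift_next_cycle x : std (stage_of k.+1) (lift_next (chdiff D k.+1 x)) = 0.
Proof. by rewrite -/(pc_diff k _) lift_next_comm chdiff_sq raddf0. Qed.

Definition lift_step : lift_stage k.+1 :=
  LiftStage lift_nextP lift_next_cycle.

End LiftStep.

Fixpoint lift_of k : lift_stage k :=
  match k with 0 => lift_stage0 | k'.+1 => lift_step (lift_of k') end.

Lemma lift_of_comm k (x : chobj D k.+1) :
  lift_map (lift_of k) (chdiff D k x) = pc_diff k (lift_map (lift_of k.+1) x).
Proof. by rewrite [lift_of k.+1]/= lift_next_comm. Qed.

Lemma pc_chain_lift : exists g : chmorph D pc_chain,
  forall k x, chmap f k x = chmap pc_morph k (chmap g k x).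
Proof.
exists (@ChMorph _ D pc_chain (fun k => lift_map (lift_of k)) lift_of_comm).
by move=> k x; rewrite /= lift_mapP.
Qed.

End Lift.
End ChainPrecover.

Section CastComplex.
Variables (R : nzRingType) (D C : complex R).

Lemma cdiff_cast m n (e : m = n) (e' : m + 1 = n + 1) (x : cobj C m) :
  cdiff C n (cast_lin (cobj C) e x) = cast_lin (cobj C) e' (cdiff C m x).
Proof. by case: n / e e' => e'; rewrite !cast_lin_id. Qed.

Lemma cmap_cast (f : cmorph D C) m n (e : m = n) (x : cobj D m) :
  cmap f n (cast_lin (cobj D) e x) = cast_lin (cobj C) e (cmap f m x).
Proof. by case: n / e. Qed.

End CastComplex.

Section Lower.
Variables (R : nzRingType) (N : int).

Lemma lower_index (k : nat) : N - k.+1%:Z + 1 = N - k%:Z.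
Proof. lia. Qed.

Definition lower_diff (C : complex R) k :
    {linear cobj C (N - k.+1%:Z) -> cobj C (N - k%:Z)} :=
  cast_lin (cobj C) (lower_index k) \o cdiff C (N - k.+1%:Z).

Lemma lower_diff_sq (C : complex R) k x : lower_diff C k (lower_diff C k.+1 x) = 0.
Proof.
have e : N - k.+2%:Z + 1 + 1 = N - k.+1%:Z + 1 by lia.
by rewrite /lower_diff /= (cdiff_cast (lower_index k.+1) e) cdiff_sq !raddf0.
Qed.

Definition lower (C : complex R) : chain R :=
  @Chain R (fun k => cobj C (N - k%:Z)) (lower_diff C) (@lower_diff_sq C).

Lemma lower_map_comm (D C : complex R) (f : cmorph D C) k x :
  cmap f (N - k%:Z) (lower_diff D k x) = lower_diff C k (cmap f (N - k.+1%:Z) x).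
Proof. by rewrite /lower_diff /= cmap_cast cmap_comm. Qed.

Definition lower_map (D C : complex R) (f : cmorph D C) : chmorph (lower D) (lower C) :=
  @ChMorph R (lower D) (lower C) (fun k => cmap f (N - k%:Z)) (lower_map_comm f).

End Lower.

Section Raise.
Variables (R : nzRingType) (N : int) (A : chain R).

(* Degree [n <= N] carries [A_(N-n)].  The terms above [N] are junk: all maps
   into and out of them are zero, which is harmless since [C] vanishes there. *)
Definition raise_idx (n : int) : nat := `|N - n|%N.

Definition raise_diff (k1 k2 : nat) : {linear chobj A k1 -> chobj A k2} :=
  match k1 =P k2.+1 with
  | ReflectT e => chdiff A k2 \o cast_lin (chobj A) e
  | ReflectF _ => \0
  end.

Lemma raise_diffE k x : raise_diff k.+1 k x = chdiff A k x.
Proof. by rewrite /raise_diff; case: eqP => // e; rewrite /= cast_lin_id. Qed.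

Lemma raise_diff0 k1 k2 x : k1 <> k2.+1 -> raise_diff k1 k2 x = 0.
Proof. by rewrite /raise_diff; case: eqP. Qed.

Lemma raise_diff_sq k1 k2 k3 x : raise_diff k2 k3 (raise_diff k1 k2 x) = 0.
Proof.
have [e1|ne1] := eqVneq k1 k2.+1; last by rewrite (raise_diff0 _ (elimN eqP ne1)) raddf0.
have [e2|ne2] := eqVneq k2 k3.+1; last by rewrite (raise_diff0 _ (elimN eqP ne2)).
by subst k1 k2; rewrite !raise_diffE chdiff_sq.
Qed.

Definition raise : complex R :=
  @Complex R (fun n => chobj A (raise_idx n))
    (fun n => raise_diff (raise_idx n) (raise_idx (n + 1)))
    (fun n => @raise_diff_sq _ _ _).

Section Morphisms.
Variables (D C : complex R).
Hypothesis zero_above : forall n, N < n -> forall x : cobj C n, x = 0.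
Variables (phi : chmorph A (lower N C)) (gamma : chmorph (lower N D) A).

Definition raise_to_map k n : {linear chobj A k -> cobj C n} :=
  match N - k%:Z =P n with
  | ReflectT e => cast_lin (cobj C) e \o chmap phi k
  | ReflectF _ => \0
  end.

Lemma raise_to_mapT k n (e : N - k%:Z = n) x :
  raise_to_map k n x = cast_lin (cobj C) e (chmap phi k x).
Proof. by rewrite /raise_to_map; case: eqP => [e'|/(_ e)//]; rewrite (eq_irrelevance e' e). Qed.

Lemma raise_to_comm_at k1 k2 n (e1 : k1 = k2.+1) (e2 : N - k2%:Z = n + 1) x :
  raise_to_map k2 (n + 1) (raise_diff k1 k2 x) = cdiff C n (raise_to_map k1 n x).
Proof.
subst k1; have en : n = N - k2.+1%:Z by lia.
subst n; rewrite raise_diffE (raise_to_mapT e2) (raise_to_mapT erefl).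
by rewrite cast_lin_id (chmap_comm phi) /= /lower_diff /= cast_linK.
Qed.

Lemma raise_to_comm n (x : cobj raise n) :
  raise_to_map (raise_idx (n + 1)) (n + 1) (cdiff raise n x)
  = cdiff C n (raise_to_map (raise_idx n) n x).
Proof.
have [ltnN|leNn] := ltP n N; last first.
  have ltN : N < n + 1 by lia.
  by rewrite [LHS]zero_above // [RHS]zero_above.
by apply: raise_to_comm_at; rewrite /raise_idx; lia.
Qed.

Definition raise_to : cmorph raise C :=
  @CMorph R raise C (fun n => raise_to_map (raise_idx n) n) raise_to_comm.

Definition raise_from_map k n : {linear cobj D n -> chobj A k} :=
  match N - k%:Z =P n with
  | ReflectT e => chmap gamma k \o cast_lin (cobj D) (esym e)
  | ReflectF _ => \0
  end.

Lemma raise_from_mapT k n (e : N - k%:Z = n) x :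
  raise_from_map k n x = chmap gamma k (cast_lin (cobj D) (esym e) x).
Proof. by rewrite /raise_from_map; case: eqP => [e'|/(_ e)//]; rewrite (eq_irrelevance e' e). Qed.

Lemma raise_from_map0 k n x : N - k%:Z <> n -> raise_from_map k n x = 0.
Proof. by rewrite /raise_from_map; case: eqP. Qed.

Lemma raise_from_comm_at k1 k2 n (e1 : k1 = k2.+1) (e2 : N - k2%:Z = n + 1) x :
  raise_from_map k2 (n + 1) (cdiff D n x) = raise_diff k1 k2 (raise_from_map k1 n x).
Proof.
subst k1; have en : n = N - k2.+1%:Z by lia.
subst n; rewrite raise_diffE (raise_from_mapT e2) (raise_from_mapT erefl).
rewrite cast_lin_id -(chmap_comm gamma) /= /lower_diff /=.
by rewrite (cast_lin_irr (esym e2) (lower_index N k2)).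
Qed.

Lemma raise_from_comm n (x : cobj D n) :
  raise_from_map (raise_idx (n + 1)) (n + 1) (cdiff D n x)
  = cdiff raise n (raise_from_map (raise_idx n) n x).
Proof.
have [ltnN|leNn] := ltP n N; last first.
  rewrite raise_from_map0 /= ?raise_diff0 //; rewrite /raise_idx; lia.
by apply: raise_from_comm_at; rewrite /raise_idx; lia.
Qed.

Definition raise_from : cmorph D raise :=
  @CMorph R D raise (fun n => raise_from_map (raise_idx n) n) raise_from_comm.

Lemma raise_factor (f : cmorph D C)
    (fact : forall k x, chmap (lower_map N f) k x = chmap phi k (chmap gamma k x)) n x :
  cmap f n x = cmap raise_to n (cmap raise_from n x).
Proof.
have [leNn|ltnN] := leP n N; last by rewrite [LHS]zero_above // [RHS]zero_above.
rewrite /=; have : N - (raise_idx n)%:Z = n by rewrite /raise_idx; lia.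
move: (raise_idx n) => k e; subst n.
by rewrite (raise_to_mapT erefl) (raise_from_mapT erefl) !cast_lin_id -fact.
Qed.

End Morphisms.
End Raise.

Theorem lemma2p23 (R : nzRingType) (X : lmodType R -> Prop) :
  (forall M : lmodType R, exists (P : lmodType R) (phi : {linear P -> M}),
      mod_precover (Xprojective X) phi /\
      (forall y : M, exists x : P, phi x = y) /\
      ker_in X phi) ->
  forall C : complex R, bounded C ->
    exists (D : complex R) (phi : cmorph D C), cx_precover (C_Xproj X) phi.
Proof.
move=> has_precover C [N bounded_C].
have pc (M : lmodType R) : exists (P : lmodType R) (phi : {linear P -> M}),
    mod_precover (Xprojective X) phi.
  by have [P [phi [? _]]] := has_precover M; exists P, phi.
have zero_above n : N%:Z < n -> forall x : cobj C n, x = 0.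
  by move=> ltNn; apply: bounded_C; lia.
pose P := pc_chain pc (lower N C).
exists (raise N P), (raise_to zero_above (pc_morph pc (lower N C))); split.
  by move=> n; apply: pc_term_in.
move=> D f HD.
have [g fact] := pc_chain_lift pc (lower_map N f) (fun k => HD _).
by exists (raise_from g) => n x; apply: raise_factor.
Qed.
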